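(* Fix $\zeta\in Z$, a pair of monotone decreasing kinetic functions $(k_c,k_e)$ with associated numbers $\tau_\ell^{sc}$ and $\tau_v^{sc}=k_c(\tau_\ell^{sc})$, and $\tau_R\in(\tau_v^{\min},\tau_v^{sc}]$. Let $\hat\tau\in(\tau_\ell^{\min},\tau_\ell^{sc}]$ be the unique element of $\mathcal A_\ell$ with $p'(\tau_R)=\frac{p(\tau_R)-p(\hat\tau)-\zeta}{\tau_R-\hat\tau}$. Then there exists a continuous monotone increasing function $g_s:[\hat\tau,\tau_\ell^{sc}]\to[\tau_R,\tau_v^{sc}]$ such that for all $\tau\in[\hat\tau,\tau_\ell^{sc}]$ $$p'(g_s(\tau))=\frac{p(g_s(\tau))-p(\tau)-\zeta}{g_s(\tau)-\tau},$$ or equivalently $c(g_s(\tau))=s_c(\tau,g_s(\tau))$.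
   Context: Thermodynamic setting. Fix real numbers $0<\tau_\ell^{\min}<\tau_\ell^{\max}<\tau_v^{\min}$ and $\zeta^{\min}<0<\zeta^{\max}$. Set $\mathcal A_\ell=(\tau_\ell^{\min},\tau_\ell^{\max})$, $\mathcal A_v=(\tau_v^{\min},\infty)$ and $Z=(\zeta^{\min},\zeta^{\max})$. Let $p\in C^2(\mathcal A_\ell\cup\mathcal A_v)$ and $\psi,\mu\in C^3(\mathcal A_\ell\cup\mathcal A_v)$ with $p=-\psi'$ and $\mu=\psi+p\tau$. Assume: (H1) $p'<0$; (H2) $p''>0$ on $\mathcal A_\ell\cup\mathcal A_v$; (H3) for every $\zeta\in Z$ there exist $\tau_\ell^{sat}(\zeta)\in\mathcal A_\ell$, $\tau_v^{sat}(\zeta)\in\mathcal A_v$ with $p(\tau_v^{sat})-p(\tau_\ell^{sat})=\zeta$, $\mu(\tau_v^{sat})=\mu(\tau_\ell^{sat})$; (H4) $p(\tau)\to\infty$ as $\tau\to\tau_\ell^{\min}$; (H5) $p'(\tau_\ell)<p'(\tau_v)$ for all $\tau_\ell\in\mathcal A_\ell,\tau_v\in\mathcal A_v$; (H6) $\int_{\tau_v^{\min}}^R c\,d\tau\to\infty$ as $R\to\infty$, where $c(\tau)=\sqrt{-p'(\tau)}$. For the fixed $\zeta$ write $\tau_\ell^{sat}=\tau_\ell^{sat}(\zeta)$, $\tau_v^{sat}=\tau_v^{sat}(\zeta)$. Speeds: $s_e(\tau_\ell,\tau_v)=-\sqrt{\frac{\zeta-p(\tau_v)+p(\tau_\ell)}{\tau_v-\tau_\ell}}$,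 $s_c(\tau_\ell,\tau_v)=+\sqrt{\frac{\zeta-p(\tau_v)+p(\tau_\ell)}{\tau_v-\tau_\ell}}$. Driving force: $f(\tau_\ell,\tau_v)=\psi(\tau_v)-\psi(\tau_\ell)+(\tau_v-\tau_\ell)\frac{p(\tau_\ell)+p(\tau_v)}2+\zeta\frac{\tau_\ell+\tau_v}2$. Pair of monotone decreasing kinetic functions: given numbers $\tau_\ell^{sc}\in(\tau_\ell^{\min},\tau_\ell^{sat})$, $\tau_v^{se}\in(\tau_v^{\min},\infty)$ and differentiable functions $k_c:[\tau_\ell^{sc},\tau_\ell^{sat}]\to\mathcal A_v$, $k_e:[\tau_v^{sat},\tau_v^{se}]\to\mathcal A_\ell$ such that $k_c'\le0$, $k_e'\le0$; $f(\tau_\ell,k_c(\tau_\ell))\ge0$ on $[\tau_\ell^{sc},\tau_\ell^{sat}]$ and $f(k_e(\tau_v),\tau_v)\le0$ on $[\tau_v^{sat},\tau_v^{se}]$; $k_c(\tau_\ell^{sat})=\tau_v^{sat}$, $k_c(\tau_\ell^{sc})=\tau_v^{sc}$ with $|s_c(\tau_\ell^{sc},\tau_v^{sc})|=c(\tau_v^{sc})$; $k_e(\tau_v^{sat})=\tau_\ell^{sat}$, $k_e(\tau_v^{se})=\tau_\ell^{se}$ with $|s_e(\tau_\ell^{se},\tau_v^{se})|=c(\tau_v^{se})$, and $k_e'(\tau_v^{se})=0$. *)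

From Stdlib Require Import Reals.
From Coquelicot Require Import Coquelicot.
Open Scope R_scope.

Definition A_l (tlmin tlmax : R) (x : R) : Prop := tlmin < x < tlmax.
Definition A_v (tvmin : R) (x : R) : Prop := tvmin < x.
Definition Dom (tlmin tlmax tvmin : R) (x : R) : Prop :=
  A_l tlmin tlmax x \/ A_v tvmin x.

(* C^2 / C^3 on an open set D (pointwise; D is open so this is the usual notion). *)
Definition C2_on (D : R -> Prop) (f : R -> R) : Prop :=
  forall x, D x ->
    ex_derive f x /\ ex_derive (Derive f) x /\ continuous (Derive (Derive f)) x.
Definition C3_on (D : R -> Prop) (f : R -> R) : Prop :=
  forall x, D x ->
    ex_derive f x /\ ex_derive (Derive f) x /\ ex_derive (Derive (Derive f)) x /\
    continuous (Derive (Derive (Derive f))) x.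

Definition sound (p : R -> R) (t : R) : R := sqrt (- Derive p t).

Definition s_e (p : R -> R) (zeta tl tv : R) : R :=
  - sqrt ((zeta - p tv + p tl) / (tv - tl)).
Definition s_c (p : R -> R) (zeta tl tv : R) : R :=
  sqrt ((zeta - p tv + p tl) / (tv - tl)).
Definition drive (p psi : R -> R) (zeta tl tv : R) : R :=
  psi tv - psi tl + (tv - tl) * ((p tl + p tv) / 2) + zeta * ((tl + tv) / 2).

Definition derive_on_interval (a b : R) (f : R -> R) (x l : R) : Prop :=
  filterlim (fun y => (f y - f x) / (y - x))
    (within (fun y => a <= y <= b /\ y <> x) (locally x)) (locally l).

(* Standing thermodynamic assumptions (H1)-(H6); tlsat, tvsat are the
   saturation maps zeta |-> tau_l^sat(zeta), tau_v^sat(zeta) of (H3). *)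
Definition thermo_setting (tlmin tlmax tvmin zmin zmax : R)
    (p psi mu tlsat tvsat : R -> R) : Prop :=
  0 < tlmin /\ tlmin < tlmax /\ tlmax < tvmin /\ zmin < 0 /\ 0 < zmax /\
  C2_on (Dom tlmin tlmax tvmin) p /\
  C3_on (Dom tlmin tlmax tvmin) psi /\
  C3_on (Dom tlmin tlmax tvmin) mu /\
  (forall t, Dom tlmin tlmax tvmin t -> p t = - Derive psi t) /\
  (forall t, Dom tlmin tlmax tvmin t -> mu t = psi t + p t * t) /\
  (forall t, Dom tlmin tlmax tvmin t -> Derive p t < 0) /\
  (forall t, Dom tlmin tlmax tvmin t -> Derive (Derive p) t > 0) /\
  (forall z, zmin < z < zmax ->
                A_l tlmin tlmax (tlsat z) /\ A_v tvmin (tvsat z) /\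
                p (tvsat z) - p (tlsat z) = z /\ mu (tvsat z) = mu (tlsat z)) /\
  filterlim p (at_right tlmin) (Rbar_locally p_infty) /\
  (forall tl tv, A_l tlmin tlmax tl -> A_v tvmin tv ->
                Derive p tl < Derive p tv) /\
  (* (H6) the (possibly improper at tvmin) integral int_{tvmin}^R c of the
     nonnegative function c tends to +oo: for c >= 0 its value is the sup
     over a in (tvmin,R) of int_a^R c. *)
  (forall M : R, exists R0 : R, forall Rr, R0 <= Rr ->
      exists a, tvmin < a < Rr /\ M <= RInt (sound p) a Rr).

(* A pair of monotone decreasing kinetic functions (k_c, k_e) for zeta, with
   derivatives dkc, dke on the closed intervals, tvsat := tvsat zeta etc. *)
Definition kinetic_pair (tlmin tlmax tvmin : R) (p psi : R -> R) (zeta tlsat tvsat : R)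
    (tlsc tvse : R) (kc ke dkc dke : R -> R) : Prop :=
  tlmin < tlsc < tlsat /\ tvmin < tvse /\ tvsat <= tvse /\
  (forall x, tlsc <= x <= tlsat ->
     A_v tvmin (kc x) /\ derive_on_interval tlsc tlsat kc x (dkc x) /\ dkc x <= 0 /\
     drive p psi zeta x (kc x) >= 0) /\
  (forall x, tvsat <= x <= tvse ->
     A_l tlmin tlmax (ke x) /\ derive_on_interval tvsat tvse ke x (dke x) /\
     dke x <= 0 /\ drive p psi zeta (ke x) x <= 0) /\
  kc tlsat = tvsat /\
  Rabs (s_c p zeta tlsc (kc tlsc)) = sound p (kc tlsc) /\
  ke tvsat = tlsat /\
  Rabs (s_e p zeta (ke tvse) tvse) = sound p tvse /\
  dke tvse = 0.

(** The sonic condition [p'(g) = (p g - p t - zeta) / (g - t)] says that the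
    defect [D t g := p g - p t - zeta - p'(g) (g - t)] vanishes.  For a liquid
    volume [t] and a vapour volume [g] we have [d D / d t = p'(g) - p'(t) > 0]
    by (H5) and [d D / d g = - p''(g) (g - t) < 0] by (H2), and [D] vanishes at
    the two corners [(that, tR)] and [(tlsc, kc tlsc)] of the rectangle
    [[that, tlsc] x [tR, kc tlsc]].  Hence for each [t] the function [D t] has
    exactly one zero [gs t] in [[tR, kc tlsc]], and [gs] is nondecreasing and
    continuous, as is any implicit zero of a function increasing in one
    variable and decreasing in the other. *)

From Stdlib Require Import Reals Lra Ranalysis5 ClassicalEpsilon.
From Coquelicot Require Import Coquelicot.
Open Scope R_scope.

Lemma IVT_decr (f : R -> R) (a b : R) :
  a <= b -> (forall g, a <= g <= b -> continuous f g) ->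
  f b <= 0 <= f a -> exists g, a <= g <= b /\ f g = 0.
Proof.
  intros Hab Hf [Hb Ha].
  destruct (Req_dec (f a) 0) as [Ea | Ea]; [exists a; split; [lra | exact Ea]|].
  destruct (Req_dec (f b) 0) as [Eb | Eb]; [exists b; split; [lra | exact Eb]|].
  assert (Hlt : a < b) by (destruct (Req_dec a b); [subst; lra | lra]).
  destruct (IVT_interv (fun g => - f g) a b) as [g [Hg Hfg]]; try lra.
  - intros g Hg. apply continuity_pt_filterlim.
    apply (continuous_opp (V := R_NormedModule)), Hf, Hg.
  - exists g. split; [exact Hg | lra].
Qed.

Lemma continuous_lt_locally (f : R -> R) (x c : R) :
  continuous f x -> f x < c -> locally x (fun y => f y < c).
Proof. intros Hf Hx. exact (Hf _ (open_lt c (f x) Hx)). Qed.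

Lemma continuous_gt_locally (f : R -> R) (x c : R) :
  continuous f x -> c < f x -> locally x (fun y => c < f y).
Proof. intros Hf Hx. exact (Hf _ (open_gt c (f x) Hx)). Qed.

Section ImplicitRoot.

Variables (h : R -> R -> R) (t0 t1 a b : R).

Hypothesis a_le_b : a <= b.
Hypothesis h_incr : forall x y g, t0 <= x -> x < y <= t1 -> a <= g <= b -> h x g < h y g.
Hypothesis h_decr : forall x g g', t0 <= x <= t1 -> a <= g -> g < g' <= b -> h x g' < h x g.
Hypothesis h_cont_l : forall x g, t0 <= x <= t1 -> a <= g <= b -> continuous (fun t => h t g) x.
Hypothesis h_cont_r : forall x g, t0 <= x <= t1 -> a <= g <= b -> continuous (h x) g.
Hypothesis h_start : 0 <= h t0 a.
Hypothesis h_end : h t1 b <= 0.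

Definition implicit_root (x : R) : R :=
  epsilon (inhabits a) (fun g => a <= g <= b /\ h x g = 0).

Let h_incr_le x y g : t0 <= x <= y -> y <= t1 -> a <= g <= b -> h x g <= h y g.
Proof.
  intros Hxy Hy Hg. destruct (Req_dec x y) as [-> | Hne]; [lra|].
  left. apply h_incr; [lra | lra | exact Hg].
Qed.

Lemma implicit_root_spec x :
  t0 <= x <= t1 -> a <= implicit_root x <= b /\ h x (implicit_root x) = 0.
Proof.
  intros Hx. unfold implicit_root. apply epsilon_spec, IVT_decr; [exact a_le_b | |].
  - intros g Hg. apply h_cont_r; [exact Hx | exact Hg].
  - split.
    + apply Rle_trans with (h t1 b); [apply h_incr_le | exact h_end]; lra.
    + apply Rle_trans with (h t0 a); [exact h_start | apply h_incr_le]; lra.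
Qed.

Lemma implicit_root_lt_of_neg x g :
  t0 <= x <= t1 -> a <= g <= b -> h x g < 0 -> implicit_root x < g.
Proof.
  intros Hx Hg Hneg. destruct (implicit_root_spec x Hx) as [Hr H0].
  destruct (Rlt_or_le (implicit_root x) g) as [Hlt | Hle]; [exact Hlt|].
  destruct (Req_dec g (implicit_root x)) as [Heq | Hne]; [rewrite Heq in Hneg; lra|].
  assert (h x (implicit_root x) < h x g) by (apply h_decr; lra).
  lra.
Qed.

Lemma implicit_root_gt_of_pos x g :
  t0 <= x <= t1 -> a <= g <= b -> 0 < h x g -> g < implicit_root x.
Proof.
  intros Hx Hg Hpos. destruct (implicit_root_spec x Hx) as [Hr H0].
  destruct (Rlt_or_le g (implicit_root x)) as [Hlt | Hle]; [exact Hlt|].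
  destruct (Req_dec g (implicit_root x)) as [Heq | Hne]; [rewrite Heq in Hpos; lra|].
  assert (h x g < h x (implicit_root x)) by (apply h_decr; lra).
  lra.
Qed.

Lemma implicit_root_le x y :
  t0 <= x <= t1 -> t0 <= y <= t1 -> x <= y -> implicit_root x <= implicit_root y.
Proof.
  intros Hx Hy Hxy. destruct (implicit_root_spec x Hx) as [Hrx Hhx].
  destruct (Rle_or_lt 0 (h y (implicit_root x))) as [Hpos | Hneg].
  - destruct Hpos as [Hpos | Hzero].
    + left. apply implicit_root_gt_of_pos; assumption.
    + destruct (implicit_root_spec y Hy) as [Hry Hhy].
      destruct (Rle_or_lt (implicit_root x) (implicit_root y)) as [Hle | Hlt]; [exact Hle|].
      assert (h y (implicit_root x) < h y (implicit_root y)) by (apply h_decr; lra).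
      lra.
  - assert (h x (implicit_root x) <= h y (implicit_root x)) by (apply h_incr_le; lra).
    lra.
Qed.

Lemma implicit_root_continuous x :
  t0 <= x <= t1 ->
  filterlim implicit_root (within (fun y => t0 <= y <= t1) (locally x))
    (locally (implicit_root x)).
Proof.
  intros Hx. apply filterlim_locally. intros eps.
  pose proof (cond_pos eps) as Heps.
  destruct (implicit_root_spec x Hx) as [Hr H0].
  assert (Hupper : locally x (fun y => t0 <= y <= t1 -> implicit_root y < implicit_root x + eps)).
  { destruct (Rlt_or_le b (implicit_root x + eps)) as [Hb | Hb].
    - apply filter_forall. intros y Hy.
      destruct (implicit_root_spec y Hy). lra.
    - assert (Hneg : h x (implicit_root x + eps) < 0).
      { rewrite <- H0. apply h_decr; lra. }
      assert (Hcont := h_cont_l x (implicit_root x + eps) Hx ltac:(lra)).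
      apply filter_imp with (2 := continuous_lt_locally _ _ _ Hcont Hneg).
      intros y Hy Hyr. apply implicit_root_lt_of_neg; [exact Hyr | lra | exact Hy]. }
  assert (Hlower : locally x (fun y => t0 <= y <= t1 -> implicit_root x - eps < implicit_root y)).
  { destruct (Rlt_or_le (implicit_root x - eps) a) as [Ha | Ha].
    - apply filter_forall. intros y Hy.
      destruct (implicit_root_spec y Hy). lra.
    - assert (Hpos : 0 < h x (implicit_root x - eps)).
      { rewrite <- H0. apply h_decr; lra. }
      assert (Hcont := h_cont_l x (implicit_root x - eps) Hx ltac:(lra)).
      apply filter_imp with (2 := continuous_gt_locally _ _ _ Hcont Hpos).
      intros y Hy Hyr. apply implicit_root_gt_of_pos; [exact Hyr | lra | exact Hy]. }
  apply filter_imp with (2 := filter_and _ _ Hupper Hlower).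
  intros y [Hu Hl] Hy. change (Rabs (implicit_root y - implicit_root x) < eps).
  specialize (Hu Hy). specialize (Hl Hy). apply Rabs_def1; lra.
Qed.

Theorem implicit_root_monotone_continuous :
  exists r : R -> R,
    (forall x, t0 <= x <= t1 ->
       filterlim r (within (fun y => t0 <= y <= t1) (locally x)) (locally (r x))) /\
    (forall x y, t0 <= x <= t1 -> t0 <= y <= t1 -> x <= y -> r x <= r y) /\
    (forall x, t0 <= x <= t1 -> a <= r x <= b /\ h x (r x) = 0).
Proof.
  exists implicit_root. split; [|split].
  - exact implicit_root_continuous.
  - exact implicit_root_le.
  - exact implicit_root_spec.
Qed.

End ImplicitRoot.

Definition sonic_defect (p : R -> R) (zeta t g : R) : R :=
  p g - p t - zeta - Derive p g * (g - t).

Lemma sonic_defect_eq_0 (p : R -> R) (zeta t g : R) : g <> t ->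
  Derive p g = (p g - p t - zeta) / (g - t) <-> sonic_defect p zeta t g = 0.
Proof.
  intros Hgt. unfold sonic_defect.
  assert (Hd : g - t <> 0) by lra.
  split; intros H.
  - rewrite H. field. exact Hd.
  - replace (p g - p t - zeta) with (Derive p g * (g - t)) by lra. field. exact Hd.
Qed.

Lemma sonic_defect_eq_0_of_s_c (p : R -> R) (zeta t g : R) :
  t < g -> Derive p g < 0 -> Rabs (s_c p zeta t g) = sound p g ->
  sonic_defect p zeta t g = 0.
Proof.
  unfold s_c, sound. intros Htg Hp' Hs.
  rewrite Rabs_pos_eq in Hs by apply sqrt_pos.
  set (A := (zeta - p g + p t) / (g - t)) in Hs.
  (* [A] cannot be negative: its square root would vanish, unlike [sqrt (- p' g)]. *)
  assert (HA : 0 <= A).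
  { destruct (Rle_or_lt A 0) as [Hle | Hlt]; [|lra].
    rewrite (sqrt_neg_0 A Hle) in Hs.
    pose proof (sqrt_lt_R0 (- Derive p g) ltac:(lra)). lra. }
  apply sqrt_inj in Hs; [|exact HA | lra].
  apply sonic_defect_eq_0; [lra|].
  rewrite <- (Ropp_involutive (Derive p g)), <- Hs. unfold A. field. lra.
Qed.

Lemma is_derive_sonic_defect_l (p : R -> R) (zeta t g : R) :
  ex_derive p t ->
  is_derive (fun t => sonic_defect p zeta t g) t (Derive p g - Derive p t).
Proof.
  intros Hp. unfold sonic_defect. auto_derive; [exact Hp|].
  change (fun x => p x) with p. ring.
Qed.

Lemma is_derive_sonic_defect_r (p : R -> R) (zeta t g : R) :
  ex_derive p g -> ex_derive (Derive p) g ->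
  is_derive (sonic_defect p zeta t) g (- (Derive (Derive p) g * (g - t))).
Proof.
  intros Hp Hp'. unfold sonic_defect. auto_derive; [tauto|].
  change (fun x => p x) with p. change (fun x => Derive p x) with (Derive p). ring.
Qed.

Section SonicDefect.

Variables (p : R -> R) (zeta tlmin tlmax tvmin : R).

Hypothesis liquid_below_vapour : tlmax < tvmin.
Hypothesis p_C2 : C2_on (Dom tlmin tlmax tvmin) p.
Hypothesis p_convex : forall t, Dom tlmin tlmax tvmin t -> Derive (Derive p) t > 0.
Hypothesis p'_liquid_lt_vapour : forall tl tv,
  A_l tlmin tlmax tl -> A_v tvmin tv -> Derive p tl < Derive p tv.

Lemma ex_derive_liquid t : A_l tlmin tlmax t -> ex_derive p t.
Proof. intros Ht. apply p_C2. left. exact Ht. Qed.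

Lemma ex_derive2_vapour g : A_v tvmin g -> ex_derive p g /\ ex_derive (Derive p) g.
Proof. intros Hg. destruct (p_C2 g) as [H1 [H2 _]]; [right; exact Hg | tauto]. Qed.

Lemma sonic_defect_increasing_l x y g :
  A_l tlmin tlmax x -> A_l tlmin tlmax y -> x < y -> A_v tvmin g ->
  sonic_defect p zeta x g < sonic_defect p zeta y g.
Proof.
  unfold A_l. intros Hx Hy Hxy Hg.
  apply (incr_function (fun t => sonic_defect p zeta t g) tlmin tlmax
           (fun t => Derive p g - Derive p t)); simpl; try lra.
  - intros t Ht1 Ht2. apply is_derive_sonic_defect_l, ex_derive_liquid. split; assumption.
  - intros t Ht1 Ht2. apply Rlt_0_minus, p'_liquid_lt_vapour; [split; assumption | exact Hg].
Qed.

Lemma sonic_defect_decreasing_r t g g' :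
  A_l tlmin tlmax t -> A_v tvmin g -> g < g' ->
  sonic_defect p zeta t g' < sonic_defect p zeta t g.
Proof.
  unfold A_l, A_v. intros Ht Hg Hgg.
  apply Ropp_lt_cancel.
  apply (incr_function (fun g => - sonic_defect p zeta t g) tvmin p_infty
           (fun g => Derive (Derive p) g * (g - t))); simpl; auto.
  - intros x Hx _. rewrite <- (Ropp_involutive (_ * _)).
    apply (is_derive_opp (sonic_defect p zeta t)), is_derive_sonic_defect_r;
      apply ex_derive2_vapour, Hx.
  - intros x Hx _. apply Rmult_lt_0_compat; [apply p_convex; right; exact Hx | lra].
Qed.

Lemma sonic_defect_continuous_l x g :
  A_l tlmin tlmax x -> continuous (fun t => sonic_defect p zeta t g) x.
Proof.
  intros Hx. apply (ex_derive_continuous (V := R_NormedModule)).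
  eexists. apply is_derive_sonic_defect_l, ex_derive_liquid, Hx.
Qed.

Lemma sonic_defect_continuous_r t g :
  A_v tvmin g -> continuous (sonic_defect p zeta t) g.
Proof.
  intros Hg. apply (ex_derive_continuous (V := R_NormedModule)).
  destruct (ex_derive2_vapour g Hg).
  eexists. apply is_derive_sonic_defect_r; assumption.
Qed.

End SonicDefect.

Theorem lemma3p6
  (tlmin tlmax tvmin zmin zmax : R) (p psi mu tlsat tvsat : R -> R)
  (Hth : thermo_setting tlmin tlmax tvmin zmin zmax p psi mu tlsat tvsat)
  (zeta : R) (Hz : zmin < zeta < zmax)
  (tlsc tvse : R) (kc ke dkc dke : R -> R)
  (Hk : kinetic_pair tlmin tlmax tvmin p psi zeta (tlsat zeta) (tvsat zeta)
          tlsc tvse kc ke dkc dke)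
  (tR : R) (HtR : tvmin < tR <= kc tlsc)
  (that : R) (Hthat : tlmin < that <= tlsc)
  (Hthat_eq : Derive p tR = (p tR - p that - zeta) / (tR - that))
  (Hthat_uniq : forall t, A_l tlmin tlmax t ->
      Derive p tR = (p tR - p t - zeta) / (tR - t) -> t = that) :
  exists gs : R -> R,
    (forall x, that <= x <= tlsc ->
       filterlim gs (within (fun y => that <= y <= tlsc) (locally x)) (locally (gs x))) /\
    (forall x y, that <= x <= tlsc -> that <= y <= tlsc -> x <= y -> gs x <= gs y) /\
    (forall x, that <= x <= tlsc ->
       tR <= gs x <= kc tlsc /\
       Derive p (gs x) = (p (gs x) - p x - zeta) / (gs x - x)).
Proof.
  destruct Hth as (_ & _ & Hlv & _ & _ & HC2 & _ & _ & _ & _ & H1 & H2 & H3 & _ & H5 & _).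
  destruct Hk as (Hsc & _ & _ & Hkc & _ & _ & Hsound & _).
  destruct (H3 zeta Hz) as [[_ Hsat] _].
  destruct (Hkc tlsc) as [Hvsc _]; [lra|].
  unfold A_v in Hvsc.
  assert (Hl : forall x, that <= x <= tlsc -> A_l tlmin tlmax x) by (unfold A_l in *; intros; lra).
  assert (Hv : forall g, tR <= g <= kc tlsc -> A_v tvmin g) by (unfold A_v; intros; lra).
  destruct (implicit_root_monotone_continuous (sonic_defect p zeta) that tlsc tR (kc tlsc))
    as [gs [Hcont [Hmono Hroot]]].
  - lra.
  - intros x y g Hx Hxy Hg.
    apply (sonic_defect_increasing_l p zeta tlmin tlmax tvmin HC2 H5);
      [apply Hl | apply Hl | | apply Hv]; lra.
  - intros x g g' Hx Hg Hgg.
    apply (sonic_defect_decreasing_r p zeta tlmin tlmax tvmin Hlv HC2 H2);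
      [apply Hl | apply Hv |]; lra.
  - intros x g Hx _. exact (sonic_defect_continuous_l p zeta tlmin tlmax tvmin HC2 x g (Hl x Hx)).
  - intros x g _ Hg. exact (sonic_defect_continuous_r p zeta tlmin tlmax tvmin HC2 x g (Hv g Hg)).
  - right. symmetry. apply sonic_defect_eq_0; [lra | exact Hthat_eq].
  - right. apply sonic_defect_eq_0_of_s_c; [lra | apply H1; right; exact Hvsc | exact Hsound].
  - exists gs. split; [exact Hcont | split; [exact Hmono |]].
    intros x Hx. destruct (Hroot x Hx) as [Hr H0]. split; [exact Hr |].
    apply sonic_defect_eq_0; [lra | exact H0].
Qed.
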